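(* Given a requirement with an $\mathbf{exist}$ $count\_exp$ operation, the minimal counting information of a node $u$ in the DVNet is $\min(\mathbf{c}_u)$ if $count\_exp$ is $\geq N$ or $> N$; it is $\max(\mathbf{c}_u)$ if $count\_exp$ is $\leq N$ or $< N$; and it is the first $\min(|\mathbf{c}_u|, 2)$ smallest elements in $\mathbf{c}_u$ if $count\_exp$ is $== N$.
   Context: A DVNet is a directed acyclic graph, obtained by multiplying the finite automaton of a regular expression $path\_exp$ (over device identifiers) with the network topology, that compactly represents all paths in the network matching $path\_exp$; each DVNet node $u$ corresponds to a device $u.dev$. For a packet $p$, each node $u$ computes a set $\mathbf{c}_u$ of non-negative integers: the distinct numbers, across $p$'s universes (possible sets of packet traces due to ANY-type forwarding actions), of copies of $p$ that can be delivered from $u$ to the destination node along DVNet paths by the network data plane. A destination node has count set $\{1\}$. If $u.dev$ forwards $p$ with an ALL-type action (copy to every next-hop in the group), $\mathbf{c}_u$ is the cross-product sum $\{a+b \mid a\in\mathbf{c}_1, b\in\mathbf{c}_2\}$ (iterated) of the count sets of the downstream neighbors $v_j$ of $u$ whose devices are among the next-hops; if the action is ANY-type (one of the next-hops), $\mathbf{c}_u$ is the union of those sets, additionally including $0$ if $u.dev$ may forward $p$ to a device with no corresponding downstream DVNet node. A requirement with operator $\mathbf{exist}$ $count\_exp$ (where $count\_exp$ is one of $== N$, $\geq N$, $> N$, $\leq N$, $< N$) requires that in every universe the number of traces of $p$ matching $path\_exp$ satisfies $count\_exp$. The minimal counting information of $u$ is defined as the minimal set of elements of $\mathbf{c}_u$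 that $u.dev$ needs to send to the devices of $u$'s upstream neighbors so that the source node of the DVNet can correctly verify the requirement, assuming arbitrary data planes at devices. *)

From HB Require Import structures.
From mathcomp Require Import all_boot all_order.
From mathcomp Require Import finmap.

Set Implicit Arguments.
Unset Strict Implicit.
Unset Printing Implicit Defensive.

Local Open Scope fset_scope.

Notation countset := {fset nat}.

Inductive count_op := OpEq | OpGe | OpGt | OpLe | OpLt.

(** [sat op N k] : the number [k] of matching traces satisfies [count_exp]. *)
Definition sat (op : count_op) (N k : nat) : bool :=
  match op with
  | OpEq => k == N
  | OpGe => N <= k
  | OpGt => N < k
  | OpLe => k <= N
  | OpLt => k < N
  end.

(** Verification at the source node: the requirement [exist count_exp] holds
    iff in every universe (i.e. for every element of the source's count set)
    the number of matching traces satisfies [count_exp]. *)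
Definition verdict (op : count_op) (N : nat) (c : countset) : bool :=
  all (sat op N) (enum_fset c).

Definition sumset (A B : countset) : countset :=
  [fset (a + b)%N | a in A, b in B].

(** How the count set of node u propagates to the source node of the DVNet,
    under arbitrary data planes: the source's count set is an expression built
    from the count set of u ([Hole], possibly used several times since the DAG
    may contain several paths from the source to u), count sets of other nodes
    ([Const]), unions (ANY-type actions, including the extra 0) and
    cross-product sums (ALL-type actions). *)
Inductive context :=
  | Hole
  | Const of countset
  | CUnion of context & context
  | CSum of context & context.

Fixpoint eval_ctx (e : context) (X : countset) : countset :=
  match e with
  | Hole => X
  | Const A => A
  | CUnion e1 e2 => eval_ctx e1 X `|` eval_ctx e2 X
  | CSum e1 e2 => sumset (eval_ctx e1 X) (eval_ctx e2 X)
  end.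

(** [S] is sufficient counting information for the count set [c] of u: it is a
    set of elements of [c], and replacing [c] by [S] never changes the verdict
    computed at the source, whatever the rest of the data plane and whatever
    the threshold [N]. *)
Definition sufficient_info (op : count_op) (c S : countset) : Prop :=
  S `<=` c /\
  forall (N : nat) (e : context), verdict op N (eval_ctx e S) = verdict op N (eval_ctx e c).

Definition minimal_info (op : count_op) (c S : countset) : Prop :=
  sufficient_info op c S /\
  forall S' : countset, sufficient_info op c S' -> #|` S| <= #|` S'|.

Definition smallest (k : nat) (c : countset) : countset :=
  [fset x | x in take k (sort leq (enum_fset c))].
Definition largest (k : nat) (c : countset) : countset :=
  [fset x | x in take k (sort geq (enum_fset c))].

Definition claimed_info (op : count_op) (c : countset) : countset :=
  match op with
  | OpGe | OpGt => smallest 1 c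
  | OpLe | OpLt => largest 1 c
  | OpEq => smallest (minn #|` c| 2) c
  end.

From HB Require Import structures.
From mathcomp Require Import all_boot all_order.
From mathcomp Require Import finmap.
From mathcomp Require Import zify.

(** For [>= N] and [> N] the verdict on a count set depends only on its
    minimum (or on its being empty), for [<= N] and [< N] only on its maximum
    and on whether it is empty, and for [== N] only on whether it is empty, a
    singleton {k} (and which k), or has at least two elements.  These summaries
    of a union or of a cross-product sum are determined by the summaries of the
    operands, so two sets with the same summary give the same verdict in every
    context, and the claimed set has the same summary as [c].  Conversely, the
    contexts [Hole] and [CSum Hole (Const [fset 1])] tell [c] apart from every
    subset with fewer elements than the claimed one. *)

Set Implicit Arguments.
Unset Strict Implicit.
Unset Printing Implicit Defensive.

Import Order.TTheory.

Local Open Scope fset_scope.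
Local Open Scope nat_scope.

Lemma verdictP op N X : reflect {in X, forall k, sat op N k} (verdict op N X).
Proof. exact: allP. Qed.

Lemma verdict0 op N : verdict op N fset0.
Proof. by apply/verdictP => k; rewrite in_fset0. Qed.

Lemma verdict1 op N m : verdict op N [fset m] = sat op N m.
Proof.
apply/verdictP/idP => [|Hm k]; first by apply; exact: fset11.
by rewrite in_fset1 => /eqP ->.
Qed.

Lemma verdictU op N A B :
  verdict op N (A `|` B) = verdict op N A && verdict op N B.
Proof.
apply/verdictP/andP => [HAB|[/verdictP HA /verdictP HB] k].
  by split; apply/verdictP => k Hk; apply: HAB; rewrite in_fsetU Hk ?orbT.
by rewrite in_fsetU => /orP [/HA|/HB].
Qed.

Lemma sumsetP A B z :
  reflect (exists2 a, a \in A & exists2 b, b \in B & z = a + b)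
          (z \in sumset A B).
Proof. exact: imfset2P. Qed.

Lemma mem_sumset A B a b : a \in A -> b \in B -> a + b \in sumset A B.
Proof. by move=> Ha Hb; apply/sumsetP; exists a => //; exists b. Qed.

Lemma sumset0 B : sumset fset0 B = fset0.
Proof.
by apply/fsetP => z; rewrite in_fset0; apply/sumsetP => -[a]; rewrite in_fset0.
Qed.

Lemma sort_head_extremal (r : rel nat) (c : countset) :
    total r -> transitive r -> c != fset0 ->
  exists m, [/\ m \in c, {in c, forall x, r m x}
              & [fset x | x in take 1 (sort r (enum_fset c))] = [fset m]].
Proof.
move=> r_total r_trans /fset0Pn [a Ha].
have mem_s := mem_sort r (enum_fset c).
have sorted_s := sort_sorted r_total (enum_fset c).
case: (sort r (enum_fset c)) mem_s sorted_s => [|m t] mem_s /= path_s.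
  by have := mem_s a; rewrite in_nil Ha.
exists m; split.
- by rewrite -mem_s mem_head.
- move=> x; rewrite -mem_s in_cons => /predU1P [-> | x_t].
    by have := r_total m m; rewrite orbb.
  exact: (allP (order_path_min r_trans path_s)) x x_t.
- by apply/fsetP => y; rewrite take0 !inE orbF.
Qed.

Lemma sub_take_sort (r : rel nat) k (c : countset) :
  [fset x | x in take k (sort r (enum_fset c))] `<=` c.
Proof.
by apply/fsubsetP => y /imfsetP [x /= /mem_take]; rewrite mem_sort => Hx ->.
Qed.

Lemma card_take_sort (r : rel nat) k (c : countset) :
  #|` [fset x | x in take k (sort r (enum_fset c))]| = minn k #|` c|.
Proof.
rewrite card_imfset //= undup_id ?size_take_min ?size_sort //.
by rewrite take_uniq // sort_uniq fset_uniq.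
Qed.

Lemma fset_min (A : countset) : A != fset0 ->
  exists2 m, m \in A & {in A, forall x, m <= x}.
Proof.
move=> A0.
have [m [Hm Hmin _]] := sort_head_extremal leq_total leq_trans A0.
by exists m.
Qed.

Lemma fset_max (A : countset) : A != fset0 ->
  exists2 m, m \in A & {in A, forall x, x <= m}.
Proof.
move=> A0.
have [m [Hm Hmax _]] := sort_head_extremal (r := geq) ge_total ge_trans A0.
by exists m.
Qed.

Definition verdict_equiv op (X Y : countset) : Prop :=
  forall N, verdict op N X = verdict op N Y.

Lemma verdict_equiv_sym op X Y : verdict_equiv op X Y -> verdict_equiv op Y X.
Proof. by move=> XY N; rewrite XY. Qed.

(** [> N] is [>= N.+1] and [<= N] is [< N.+1].  Unlike [<= N], [< N] detects
    emptiness (at [N = 0]), which the cross-product sum needs. *)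
Definition base_op op :=
  match op with
  | OpGe | OpGt => OpGe
  | OpLe | OpLt => OpLt
  | OpEq => OpEq
  end.

Lemma verdict_equiv_base op X Y :
  verdict_equiv (base_op op) X Y -> verdict_equiv op X Y.
Proof. by case: op => XY N; [| | exact: XY N.+1 | exact: XY N.+1 |]. Qed.

Lemma sat_base_refutable op k : exists N, ~~ sat (base_op op) N k.
Proof.
by case: op; [exists k.+1 | exists k.+1 | exists k.+1 | exists 0 | exists 0];
  rewrite /=; lia.
Qed.

Lemma verdict_equiv_nonempty op X Y y :
  verdict_equiv (base_op op) X Y -> y \in Y -> X != fset0.
Proof.
move=> XY Hy; apply/negP => /eqP X0; have [N /negP] := sat_base_refutable op y.
by apply; move: y Hy; apply/verdictP; rewrite -XY X0 verdict0.
Qed.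

Lemma verdict_sumset_ge A A' B B' N :
    verdict_equiv OpGe A A' -> verdict_equiv OpGe B B' ->
  verdict OpGe N (sumset A B) -> verdict OpGe N (sumset A' B').
Proof.
move=> AA' BB' /verdictP AB; apply/verdictP => _ /sumsetP [a' Ha' [b' Hb' ->]].
have [a Ha amin] := fset_min (verdict_equiv_nonempty (op := OpGe) AA' Ha').
have [b Hb bmin] := fset_min (verdict_equiv_nonempty (op := OpGe) BB' Hb').
have /verdictP/(_ a' Ha') : verdict OpGe a A' by rewrite -AA'; apply/verdictP.
have /verdictP/(_ b' Hb') : verdict OpGe b B' by rewrite -BB'; apply/verdictP.
by have := AB _ (mem_sumset Ha Hb) => /=; lia.
Qed.

Lemma verdict_sumset_lt A A' B B' N :
    verdict_equiv OpLt A A' -> verdict_equiv OpLt B B' ->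
  verdict OpLt N (sumset A B) -> verdict OpLt N (sumset A' B').
Proof.
move=> AA' BB' /verdictP AB; apply/verdictP => _ /sumsetP [a' Ha' [b' Hb' ->]].
have [a Ha amax] := fset_max (verdict_equiv_nonempty (op := OpLt) AA' Ha').
have [b Hb bmax] := fset_max (verdict_equiv_nonempty (op := OpLt) BB' Hb').
have /verdictP/(_ a' Ha') : verdict OpLt a.+1 A'.
  by rewrite -AA'; apply/verdictP.
have /verdictP/(_ b' Hb') : verdict OpLt b.+1 B'.
  by rewrite -BB'; apply/verdictP.
by have := AB _ (mem_sumset Ha Hb) => /=; lia.
Qed.

Lemma verdict_sumset_eq A A' B B' N :
    verdict_equiv OpEq A A' -> verdict_equiv OpEq B B' ->
  verdict OpEq N (sumset A B) -> verdict OpEq N (sumset A' B').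
Proof.
move=> AA' BB' /verdictP AB; apply/verdictP => _ /sumsetP [a' Ha' [b' Hb' ->]].
have /fset0Pn [a Ha] := verdict_equiv_nonempty (op := OpEq) AA' Ha'.
have /fset0Pn [b Hb] := verdict_equiv_nonempty (op := OpEq) BB' Hb'.
have /eqP Nab := AB _ (mem_sumset Ha Hb).
have /verdictP/(_ a' Ha') : verdict OpEq a A'.
  rewrite -AA'; apply/verdictP => x Hx /=.
  by have /eqP := AB _ (mem_sumset Hx Hb); lia.
have /verdictP/(_ b' Hb') : verdict OpEq b B'.
  rewrite -BB'; apply/verdictP => y Hy /=.
  by have /eqP := AB _ (mem_sumset Ha Hy); lia.
by rewrite /=; lia.
Qed.

Lemma verdict_equiv_sumset op A A' B B' :
    verdict_equiv (base_op op) A A' -> verdict_equiv (base_op op) B B' ->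
  verdict_equiv (base_op op) (sumset A B) (sumset A' B').
Proof.
have sumset_imp A1 A2 B1 B2 N :
    verdict_equiv (base_op op) A1 A2 -> verdict_equiv (base_op op) B1 B2 ->
    verdict (base_op op) N (sumset A1 B1) ->
  verdict (base_op op) N (sumset A2 B2).
  case: op; [exact: verdict_sumset_eq | exact: verdict_sumset_ge
    | exact: verdict_sumset_ge | exact: verdict_sumset_lt
    | exact: verdict_sumset_lt].
move=> AA' BB' N; apply/idP/idP; apply: sumset_imp => //.
all: exact: verdict_equiv_sym.
Qed.

Lemma verdict_equiv_ctx op e X Y :
    verdict_equiv (base_op op) X Y ->
  verdict_equiv (base_op op) (eval_ctx e X) (eval_ctx e Y).
Proof.
move=> XY; elim: e => [|A|e1 IH1 e2 IH2|e1 IH1 e2 IH2] //=.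
  by move=> N; rewrite !verdictU IH1 IH2.
exact: verdict_equiv_sumset.
Qed.

Lemma sufficient_info_base op c S :
  S `<=` c -> verdict_equiv (base_op op) S c -> sufficient_info op c S.
Proof.
move=> Sc Sc_equiv; split=> // N e.
exact/verdict_equiv_base/verdict_equiv_ctx.
Qed.

Lemma verdict_equiv_weakest op c m :
    m \in c -> (forall N, {in c, forall x, sat op N m -> sat op N x}) ->
  verdict_equiv op [fset m] c.
Proof.
move=> Hm weakest N; rewrite verdict1.
by apply/idP/verdictP => [Nm x Hx | /(_ m Hm)]; first exact: weakest.
Qed.

Lemma verdict_equiv_smallest1 c :
  c != fset0 -> verdict_equiv OpGe (smallest 1 c) c.
Proof.
rewrite /smallest => c0.
have [m [Hm mmin ->]] := sort_head_extremal leq_total leq_trans c0.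
by apply: verdict_equiv_weakest => // N x /mmin mx Nm; apply: leq_trans Nm mx.
Qed.

Lemma verdict_equiv_largest1 c :
  c != fset0 -> verdict_equiv OpLt (largest 1 c) c.
Proof.
rewrite /largest => c0.
have [m [Hm mmax ->]] := sort_head_extremal (r := geq) ge_total ge_trans c0.
apply: verdict_equiv_weakest => // N x /mmax xm mN.
exact: leq_ltn_trans xm mN.
Qed.

Lemma verdict_eq_card N X : verdict OpEq N X -> #|` X| <= 1.
Proof.
move=> /verdictP XN; rewrite -(cardfs1 N); apply: fsubset_leq_card.
by apply/fsubsetP => x /XN /eqP ->; apply: fset11.
Qed.

Lemma verdict_equiv_card2 X Y :
  2 <= #|` X| -> 2 <= #|` Y| -> verdict_equiv OpEq X Y.
Proof. by move=> X2 Y2 N; apply/idP/idP => /verdict_eq_card; lia. Qed.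

Lemma verdict_equiv_smallest2 c :
  verdict_equiv OpEq (smallest (minn #|` c| 2) c) c.
Proof.
rewrite /smallest; set S := [fset x | x in _].
have card_S : #|` S| = minn #|` c| 2 by rewrite card_take_sort minnAC minnn.
have [c2 | c1] := leqP 2 #|` c|; first by apply: verdict_equiv_card2; lia.
have -> : S = c by apply/eqP; rewrite eqEfcard sub_take_sort card_S; lia.
by [].
Qed.

Lemma claimed_info_sub op c : claimed_info op c `<=` c.
Proof. by case: op; apply: sub_take_sort. Qed.

Lemma claimed_info_equiv op c :
  c != fset0 -> verdict_equiv (base_op op) (claimed_info op c) c.
Proof.
case: op => c0; first exact: verdict_equiv_smallest2.
- exact: verdict_equiv_smallest1.
- exact: verdict_equiv_smallest1.
- exact: verdict_equiv_largest1.
- exact: verdict_equiv_largest1.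
Qed.

Lemma sat_succ_refutable op k : exists N, ~~ sat op N k.+1.
Proof.
by case: op; [exists 0 | exists k.+2 | exists k.+2 | exists 0 | exists 0];
  rewrite /=; lia.
Qed.

Lemma sufficient_info_nonempty op (c S : countset) :
  c != fset0 -> sufficient_info op c S -> S != fset0.
Proof.
move=> /fset0Pn [x Hx] [_ suffS]; apply/negP => /eqP S0.
(* Shifting by [1] makes every count refutable, even for [<= N]. *)
have [N /negP] := sat_succ_refutable op x; apply.
have := suffS N (CSum Hole (Const [fset 1])); rewrite S0 /= sumset0 verdict0.
move=> /esym/verdictP; apply; rewrite -addn1.
exact: mem_sumset Hx (fset11 1).
Qed.

Lemma card_sufficient_info_eq (c S : countset) :
  c != fset0 -> sufficient_info OpEq c S -> minn #|` c| 2 <= #|` S|.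
Proof.
move=> c0 suffS; have /fset0Pn [x Hx] := sufficient_info_nonempty c0 suffS.
have [S2 | S1] := leqP 2 #|` S|; first by rewrite geq_min S2 orbT.
have Sx : S = [fset x] by apply/esym/eqP; rewrite eqEfcard fsub1set Hx cardfs1.
have := suffS.2 x Hole; rewrite Sx verdict1 /= eqxx => /esym/verdict_eq_card.
by rewrite cardfs1 geq_min => ->.
Qed.

Lemma claimed_info_minimal op (c S : countset) :
  c != fset0 -> sufficient_info op c S -> #|` claimed_info op c| <= #|` S|.
Proof.
move=> c0 suffS; case: op suffS => suffS;
  rewrite /= /smallest /largest card_take_sort.
  by rewrite minnAC minnn; apply: card_sufficient_info_eq.
all: by rewrite geq_min cardfs_gt0 (sufficient_info_nonempty c0 suffS).
Qed.

Theorem proposition1 (op : count_op) (c : {fset nat}) :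
  c != fset0 -> minimal_info op c (claimed_info op c).
Proof.
move=> c0; split; last by move=> S; apply: claimed_info_minimal.
exact: sufficient_info_base (claimed_info_sub op c) (claimed_info_equiv op c0).
Qed.
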